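(* Let $(M,+)$ be an Abelian semigroup, $\mathcal A_0=\{\theta\in\mathbb N_0^n:\theta\le1\}$, $h:\mathcal A_0\to M$ and $\alpha\in\mathcal A_0$. If $1-\alpha$ is even, then $$\sum_{\mathrm{ev}\,\theta\le\alpha}h(1-\alpha+\theta)+\sum_{\mathrm{od}\,\beta\le1-\alpha}\ \sum_{\mathrm{ev}\,\theta\le\alpha+\beta}h(\theta)=\sum_{\mathrm{ev}\,\beta\le1-\alpha}\ \sum_{\mathrm{ev}\,\theta\le\alpha+\beta}h(\theta),$$ $$\sum_{\mathrm{od}\,\theta\le\alpha}h(1-\alpha+\theta)+\sum_{\mathrm{od}\,\beta\le1-\alpha}\ \sum_{\mathrm{od}\,\theta\le\alpha+\beta}h(\theta)=\sum_{\mathrm{ev}\,\beta\le1-\alpha}\ \sum_{\mathrm{od}\,\theta\le\alpha+\beta}h(\theta);$$ and if $1-\alpha$ is odd, then $$\sum_{\substack{\theta\ \mathrm{even}\\ 1-\alpha\le\theta\le1}}h(\theta)+\sum_{\mathrm{ev}\,\beta\le1-\alpha}\ \sum_{\mathrm{ev}\,\theta\le\alpha+\beta}h(\theta)=\sum_{\mathrm{od}\,\beta\le1-\alpha}\ \sum_{\mathrm{ev}\,\theta\le\alpha+\beta}h(\theta),$$ $$\sum_{\substack{\theta\ \mathrm{odd}\\ 1-\alpha\le\theta\le1}}h(\theta)+\sum_{\mathrm{ev}\,\beta\le1-\alpha}\ \sum_{\mathrm{od}\,\theta\le\alpha+\beta}h(\theta)=\sum_{\mathrm{od}\,\beta\le1-\alpha}\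 \sum_{\mathrm{od}\,\theta\le\alpha+\beta}h(\theta).$$
   Context: Inequalities between multiindices in $\mathbb N_0^n$ are componentwise; $|\theta|=\theta_1+\dots+\theta_n$; $0$ and $1$ denote $(0,\dots,0)$ and $(1,\dots,1)$. A multiindex $\theta$ with $0\le\theta\le1$ is even (odd) if $|\theta|$ is even (odd); in particular $0$ is even. $\sum_{\mathrm{ev}\,\theta\le\alpha}$ ($\sum_{\mathrm{od}\,\theta\le\alpha}$) denotes the sum over even (odd) $\theta$ with $\theta\le\alpha$. Empty sums and omitted terms are dropped from an expression (no zero element is assumed); an equality both of whose sides are empty is regarded as trivially true. *)

From HB Require Import structures.
From mathcomp Require Import all_boot.
Set Implicit Arguments. Unset Strict Implicit. Unset Printing Implicit Defensive.

Definition A0 (n : nat) := {ffun 'I_n -> 'I_2}.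

Definition mle n (a b : A0 n) : bool := [forall i, (a i <= b i)%N].
Definition mle_add n (t a b : A0 n) : bool := [forall i, (t i <= a i + b i)%N].
Definition mabs n (a : A0 n) : nat := \sum_(i < n) (a i : nat).
Definition meven n (a : A0 n) : bool := ~~ odd (mabs a).
Definition modd n (a : A0 n) : bool := odd (mabs a).
Definition one_minus n (a : A0 n) : A0 n := [ffun i => inord (1 - a i)].
(* 1 - alpha + theta  (only used with theta <= alpha, so it lies in A_0) *)
Definition shift n (a t : A0 n) : A0 n := [ffun i => inord (1 - a i + t i)].

(* Sums in an abelian semigroup without zero: adjoin a formal zero None;
   empty sums are None, and nonempty sums are Some of the semigroup sum. *)
Definition oadd (M : Type) (add : M -> M -> M) (x y : option M) : option M :=
  match x, y with
  | Some a, Some b => Some (add a b)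
  | Some a, None => Some a
  | None, y => y
  end.

Definition osum (M : Type) (add : M -> M -> M) n (P : pred (A0 n))
  (F : A0 n -> option M) : option M :=
  \big[oadd add/None]_(t | P t) F t.

From HB Require Import structures.
From mathcomp Require Import all_boot.
Set Implicit Arguments. Unset Strict Implicit. Unset Printing Implicit Defensive.

(* Exchanging the order of summation, each double sum counts h(theta) once for
   every beta <= 1 - alpha of the prescribed parity with theta <= alpha + beta.
   These beta form a subcube of {0,1}^n.  If the subcube has a free coordinate,
   flipping it is a parity-reversing involution, so the subcube has as many even
   as odd points; otherwise (exactly when 1 - alpha <= theta) it is the single
   point 1 - alpha, which produces the extra sum over 1 - alpha <= theta <= 1.
   When 1 - alpha is even, the substitution theta |-> 1 - alpha + theta turns
   that sum into the one over theta <= alpha without changing parities. *)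

Lemma bitP (x : 'I_2) : x = 0 :> nat \/ x = 1 :> nat.
Proof. by case: x => [[|[|]]] //=; auto. Qed.

Lemma leq_bit (x : 'I_2) : x <= 1.
Proof. by case: (bitP x) => ->. Qed.

Lemma inord_bitE k : k <= 1 -> (inord k : 'I_2) = k :> nat.
Proof. exact: inordK. Qed.

Lemma one_minusE n (a : A0 n) i : one_minus a i = 1 - a i :> nat.
Proof. by rewrite ffunE inord_bitE ?leq_subr. Qed.

Definition flip n (i : 'I_n) (b : A0 n) : A0 n :=
  [ffun j => if j == i then inord (1 - b j) else b j].

Lemma flipE n (i : 'I_n) b j : flip i b j = (if j == i then 1 - b j else b j) :> nat.
Proof. by rewrite ffunE; case: eqP => // _; rewrite inord_bitE ?leq_subr. Qed.

Lemma flipK n (i : 'I_n) : involutive (flip i).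
Proof.
move=> b; apply/ffunP => j; apply: val_inj; rewrite /= !flipE.
by case: eqP => // ->; case: (bitP (b i)) => ->.
Qed.

Lemma modd_flip n (i : 'I_n) b : modd (flip i b) = ~~ modd b.
Proof.
rewrite /modd /mabs (bigD1 i) // [in RHS](bigD1 i) //= flipE eqxx.
rewrite (eq_bigr (fun j => b j : nat)); last by move=> j /negPf ji; rewrite flipE ji.
by rewrite !oddD; case: (bitP (b i)) => ->; rewrite /= ?negbK.
Qed.

Lemma card_parity_flip n (P : pred (A0 n)) (i : 'I_n) q :
  (forall b, P (flip i b) = P b) ->
  #|[pred b | P b && (modd b == q)]| = #|[pred b | P b && (modd b == ~~ q)]|.
Proof.
move=> Pflip; rewrite -[RHS]cardsE -(card_preimset _ (can_inj (flipK i))).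
apply: eq_card => b; rewrite !inE Pflip modd_flip.
by case: (modd b); case: q.
Qed.

Definition window n (a t : A0 n) : pred (A0 n) :=
  [pred b | mle b (one_minus a) && mle_add t a b].

Lemma window_flip n (a t : A0 n) : ~~ mle (one_minus a) t ->
  exists i, forall b, window a t (flip i b) = window a t b.
Proof.
case/forallPn => i; rewrite one_minusE => not_le; exists i => b.
have [ai ti] : a i = 0 :> nat /\ t i = 0 :> nat.
  by move: not_le; case: (bitP (a i)) => ->; case: (bitP (t i)) => ->.
congr andb; apply: eq_forallb => j; rewrite flipE; case: eqP => // ->.
  by rewrite one_minusE ai leq_subr leq_bit.
by rewrite ti.
Qed.

Lemma window_corner n (a t : A0 n) : mle (one_minus a) t ->
  window a t =1 pred1 (one_minus a).
Proof.
move=> /forallP le_at b; apply/andP/eqP => [[/forallP le_ba /forallP le_tab]|->].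
  apply/ffunP => i; apply: val_inj; move: (le_at i) (le_ba i) (le_tab i).
  rewrite /= !one_minusE.
  by case: (bitP (a i)) => ->; case: (bitP (b i)) => ->; case: (bitP (t i)) => ->.
split; apply/forallP => i //; move: (le_at i); rewrite !one_minusE.
by case: (bitP (a i)) => ->; case: (bitP (t i)) => ->.
Qed.

Lemma card_window_parity n (a t : A0 n) :
  #|[pred b | window a t b && (modd b == modd (one_minus a))]|
  = #|[pred b | window a t b && (modd b == ~~ modd (one_minus a))]| + mle (one_minus a) t.
Proof.
have [corner|/window_flip[i wflip]] := boolP (mle (one_minus a) t); last first.
  by rewrite addn0; apply: card_parity_flip.
rewrite (eq_card (B := pred1 (one_minus a))); last first.
  by move=> b; rewrite !inE window_corner //=; case: eqP => // ->; rewrite eqxx.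
rewrite card1 (eq_card (B := pred0)) ?card0 // => b.
by rewrite !inE window_corner //=; case: eqP => // ->; case: (modd _).
Qed.

Definition unshift n (a s : A0 n) : A0 n := [ffun i => inord (s i - one_minus a i)].

Lemma shiftE n (a t : A0 n) i : t i <= a i -> shift a t i = one_minus a i + t i :> nat.
Proof.
rewrite ffunE one_minusE => le_ta; rewrite inord_bitE //.
by move: le_ta; case: (bitP (a i)) => ->; case: (bitP (t i)) => ->.
Qed.

Lemma inord_two : (inord 2 : 'I_2) = ord0.
Proof. by apply: val_inj; rewrite /= /inord /insubd insubF. Qed.

(* Off the range [t <= a], [shift] wraps around since [inord 2 = 0] in ['I_2]. *)
Lemma mle_one_minus_shift n (a t : A0 n) : mle (one_minus a) (shift a t) = mle t a.
Proof.
apply: eq_forallb => i; rewrite one_minusE.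
have [le_ta|] := leqP (t i) (a i); first by rewrite shiftE // one_minusE leq_addr.
rewrite ffunE; case: (bitP (a i)) => ->; case: (bitP (t i)) => -> //= _.
by rewrite inord_two.
Qed.

Lemma mabs_shift n (a t : A0 n) :
  mle t a -> mabs (shift a t) = mabs (one_minus a) + mabs t.
Proof.
by move=> /forallP le_ta; rewrite /mabs -big_split; apply: eq_bigr => i _; apply: shiftE.
Qed.

Lemma big_shift (R : Type) (idx : R) (op : SemiGroup.com_law R) n (a : A0 n)
    (P : pred (A0 n)) (F : A0 n -> R) :
  \big[op/idx]_(s | mle (one_minus a) s && P s) F s
  = \big[op/idx]_(t | mle t a && P (shift a t)) F (shift a t).
Proof.
rewrite (reindex (shift a)) /=; last first.
  exists (unshift a) => [t | s]; rewrite inE => /andP[le_st _].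
    move: le_st; rewrite mle_one_minus_shift => /forallP le_ta.
    apply/ffunP => i; apply: val_inj.
    by rewrite /= ffunE shiftE // addKn inord_bitE ?leq_bit.
  move/forallP: le_st => le_st; apply/ffunP => i; apply: val_inj.
  have unshiftE : unshift a s i = s i - one_minus a i :> nat.
    by rewrite ffunE inord_bitE // (leq_trans (leq_subr _ _) (leq_bit _)).
  rewrite /= shiftE unshiftE ?subnKC //.
  move: (le_st i); rewrite one_minusE.
  by case: (bitP (a i)) => ->; case: (bitP (s i)) => ->.
by apply: eq_bigl => t; rewrite mle_one_minus_shift.
Qed.

(* [parity false] and [parity true] unfold to [meven] and [modd], so lemmas
   about [parity q] apply to both by conversion. *)
Definition parity n (q : bool) (b : A0 n) : bool := if q then modd b else meven b.

Lemma parityE n q (b : A0 n) : parity q b = (modd b == q).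
Proof. by case: q; rewrite /= ?eqb_id ?eqbF_neg. Qed.

Section OptionSums.

Variables (M : Type) (add : M -> M -> M).
Hypotheses (addA : associative add) (addC : commutative add).

Lemma oaddA : associative (oadd add).
Proof. by case=> [a|] [b|] [c|] //=; rewrite addA. Qed.

Lemma oaddC : commutative (oadd add).
Proof. by case=> [a|] [b|] //=; rewrite addC. Qed.

Lemma oadd0 : left_id None (oadd add). Proof. by case. Qed.

HB.instance Definition _ :=
  Monoid.isComLaw.Build (option M) None (oadd add) oaddA oaddC oadd0.

Lemma iter_oadd_bool (e : bool) x y :
  iter e (oadd add x) y = oadd add (if e then x else None) y.
Proof. by case: e. Qed.

Lemma osum_exchange n (P Q : pred (A0 n)) (c : A0 n -> A0 n -> bool) (F : A0 n -> M) :
  osum add Q (fun b => osum add (fun t => P t && c t b) (fun t => Some (F t)))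
  = \big[oadd add/None]_(t | P t)
      iter #|[pred b | Q b && c t b]| (oadd add (Some (F t))) None.
Proof.
rewrite /osum (exchange_big_dep P) /=; last by move=> b t _ /andP[].
apply: eq_bigr => t Pt; rewrite -big_const; apply: eq_bigl => b.
by rewrite !inE Pt.
Qed.

Variables (n : nat) (h : A0 n -> M) (alpha : A0 n).

Definition inner_sum (par : pred (A0 n)) (b : A0 n) : option M :=
  osum add (fun t => par t && mle_add t alpha b) (fun t => Some (h t)).

Lemma osum_parity_window (par : pred (A0 n)) q : q = modd (one_minus alpha) ->
  oadd add
    (osum add (fun t => par t && mle (one_minus alpha) t) (fun t => Some (h t)))
    (osum add (fun b => parity (~~ q) b && mle b (one_minus alpha)) (inner_sum par))
  = osum add (fun b => parity q b && mle b (one_minus alpha)) (inner_sum par).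
Proof.
move=> q_one; rewrite /inner_sum !osum_exchange.
have card_eq t :
    #|[pred b | (parity q b && mle b (one_minus alpha)) && mle_add t alpha b]|
    = mle (one_minus alpha) t
      + #|[pred b | (parity (~~ q) b && mle b (one_minus alpha)) && mle_add t alpha b]|.
  have eq_window q' :
      [pred b | (parity q' b && mle b (one_minus alpha)) && mle_add t alpha b]
      =i [pred b | window alpha t b && (modd b == q')].
    by move=> b; rewrite !inE parityE -andbA andbC.
  by rewrite !(eq_card (eq_window _)) addnC q_one card_window_parity.
under [RHS]eq_bigr => t _ do rewrite card_eq iterD iter_oadd_bool.
by rewrite big_split /= -big_mkcondr.
Qed.

Lemma osum_shift q : meven (one_minus alpha) ->
  osum add (fun t => parity q t && mle t alpha) (fun t => Some (h (shift alpha t)))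
  = osum add (fun s => parity q s && mle (one_minus alpha) s) (fun s => Some (h s)).
Proof.
move=> even_one; rewrite /osum.
under [RHS]eq_bigl => s do rewrite andbC.
rewrite big_shift; apply: eq_bigl => t; rewrite andbC.
case le_ta: (mle t alpha) => //=.
by rewrite !parityE /modd mabs_shift // oddD (negbTE even_one).
Qed.

End OptionSums.

Theorem lemma7 (M : Type) (add : M -> M -> M)
  (addA : associative add) (addC : commutative add)
  (n : nat) (h : A0 n -> M) (alpha : A0 n) :
  let one_a := one_minus alpha in
  let S (P : pred (A0 n)) (F : A0 n -> option M) := osum add P F in
  let inner (par : A0 n -> bool) (b : A0 n) :=
    S (fun t => par t && mle_add t alpha b) (fun t => Some (h t)) in
  (meven one_a ->
     oadd add (S (fun t => meven t && mle t alpha) (fun t => Some (h (shift alpha t))))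
              (S (fun b => modd b && mle b one_a) (inner (@meven n)))
     = S (fun b => meven b && mle b one_a) (inner (@meven n))
   /\
     oadd add (S (fun t => modd t && mle t alpha) (fun t => Some (h (shift alpha t))))
              (S (fun b => modd b && mle b one_a) (inner (@modd n)))
     = S (fun b => meven b && mle b one_a) (inner (@modd n)))
  /\
  (modd one_a ->
     oadd add (S (fun t => meven t && mle one_a t) (fun t => Some (h t)))
              (S (fun b => meven b && mle b one_a) (inner (@meven n)))
     = S (fun b => modd b && mle b one_a) (inner (@meven n))
   /\
     oadd add (S (fun t => modd t && mle one_a t) (fun t => Some (h t)))
              (S (fun b => meven b && mle b one_a) (inner (@modd n)))
     = S (fun b => modd b && mle b one_a) (inner (@modd n))).
Proof.
move=> one_a S inner; rewrite {}/inner {}/S {}/one_a.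
split=> [even_one | odd_one].
  have q_one : false = modd (one_minus alpha) by apply/esym/negbTE.
  have shift_q q := osum_shift addA addC h q even_one.
  by split; [rewrite (shift_q false) | rewrite (shift_q true)];
    exact: (osum_parity_window addA addC h _ q_one).
have q_one : true = modd (one_minus alpha) by [].
by split; exact: (osum_parity_window addA addC h _ q_one).
Qed.
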